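(* Let $\mathfrak g_0$ be a proper (continuous or sequential) contraction of the real $n$-dimensional Lie algebra $\mathfrak g$. Then $\mathrm{rank}_+\kappa_{\mathfrak g_0}\le\mathrm{rank}_+\kappa_{\mathfrak g}$ and $\mathrm{rank}_-\kappa_{\mathfrak g_0}\le\mathrm{rank}_-\kappa_{\mathfrak g}$. Moreover, for every $\alpha\in\mathbb R$, $\mathrm{rank}_+\tilde\kappa^\alpha_{\mathfrak g_0}\le\mathrm{rank}_+\tilde\kappa^\alpha_{\mathfrak g}$ and $\mathrm{rank}_-\tilde\kappa^\alpha_{\mathfrak g_0}\le\mathrm{rank}_-\tilde\kappa^\alpha_{\mathfrak g}$.
   Context: Let $V$ be an $n$-dimensional real vector space and $\mathfrak g=(V,[\cdot,\cdot])$ a Lie algebra. Continuous contraction: for a continuous map $U:(0,1]\to GL(V)$, $\varepsilon\mapsto U_\varepsilon$, put $[x,y]_\varepsilon=U_\varepsilon^{-1}[U_\varepsilon x,U_\varepsilon y]$; if $[x,y]_0:=\lim_{\varepsilon\to0^+}[x,y]_\varepsilon$ exists for all $x,y\in V$, the Lie algebra $\mathfrak g_0=(V,[\cdot,\cdot]_0)$ is called a (one-parametric continuous) contraction of $\mathfrak g$. Sequential contraction: the same with a sequence $U_p\in GL(V)$ and $p\to\infty$. A contraction is proper if $\mathfrak g_0\not\cong\mathfrak g$. The Killing form is $\kappa_{\mathfrak g}(u,v)=\mathrm{tr}(\mathrm{ad}_u\mathrm{ad}_v)$ and the modified Killing form is $\tilde\kappa^\alpha_{\mathfrak g}(u,v)=\mathrm{tr}(\mathrm{ad}_u\mathrm{ad}_v)+\alpha\,\mathrm{tr}(\mathrm{ad}_u)\mathrm{tr}(\mathrm{ad}_v)$.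 For a real symmetric bilinear form, $\mathrm{rank}_+$ (resp. $\mathrm{rank}_-$) is the number of positive (resp. negative) entries in a diagonal form (Sylvester inertia). *)

From HB Require Import structures.
From mathcomp Require Import all_boot all_order all_algebra.
From mathcomp Require Import all_classical all_reals all_analysis.
Set Implicit Arguments. Unset Strict Implicit. Unset Printing Implicit Defensive.
Import Order.TTheory GRing.Theory Num.Theory numFieldNormedType.Exports.
Local Open Scope classical_set_scope.
Local Open Scope ring_scope.

Section LieDefs.
Variables (R : realType) (n : nat).

(* V = R^n, vectors are row vectors; a linear map U in GL(V) acts as x |-> x *m U. *)
Definition bracket := 'rV[R]_n -> 'rV[R]_n -> 'rV[R]_n.

Definition is_lie_bracket (br : bracket) : Prop :=
  [/\ (forall (a : R) x y z, br (a *: x + y) z = a *: br x z + br y z),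
      (forall (a : R) x y z, br z (a *: x + y) = a *: br z x + br z y),
      (forall x, br x x = 0) &
      (forall x y z, br x (br y z) + br y (br z x) + br z (br x y) = 0)].

Definition evec (i : 'I_n) : 'rV[R]_n := delta_mx 0 i.

(* Matrix of ad_u : v |-> br u v (row i = image of e_i). *)
Definition ad_mx (br : bracket) (u : 'rV[R]_n) : 'M[R]_n :=
  \matrix_(i, j) br u (evec i) 0 j.

Definition killing (br : bracket) (u v : 'rV[R]_n) : R :=
  \tr (ad_mx br u *m ad_mx br v).

Definition mkilling (alpha : R) (br : bracket) (u v : 'rV[R]_n) : R :=
  killing br u v + alpha * \tr (ad_mx br u) * \tr (ad_mx br v).

(* [inertia B p q]: in some basis (the rows of the invertible matrix P) the
   symmetric bilinear form B is diagonal with exactly p positive and q negative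
   diagonal entries; i.e. rank_+ B = p and rank_- B = q (Sylvester inertia). *)
Definition inertia (B : 'rV[R]_n -> 'rV[R]_n -> R) (p q : nat) : Prop :=
  exists P : 'M[R]_n,
    [/\ P \in unitmx,
        (forall i j : 'I_n, i != j -> B (row i P) (row j P) = 0),
        #|[pred i : 'I_n | 0 < B (row i P) (row i P)]| = p &
        #|[pred i : 'I_n | B (row i P) (row i P) < 0]| = q].

Definition contracted (br : bracket) (U : 'M[R]_n) : bracket :=
  fun x y => br (x *m U) (y *m U) *m invmx U.

Definition continuous_contraction (br br0 : bracket) : Prop :=
  exists U : R -> 'M[R]_n,
    [/\ (forall e : R, 0 < e <= 1 -> U e \in unitmx),
        (forall i j, {within [set e : R | 0 < e <= 1], continuous (fun e : R => U e i j)}%classic) &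
        (forall x y k,
           (fun e => contracted br (U e) x y 0 k) @ 0^'+ --> br0 x y 0 k)].

Definition sequential_contraction (br br0 : bracket) : Prop :=
  exists U : nat -> 'M[R]_n,
    (forall p, U p \in unitmx) /\
    (forall x y k,
       (fun p => contracted br (U p) x y 0 k) @ \oo --> br0 x y 0 k).

Definition lie_isomorphic (br0 br : bracket) : Prop :=
  exists A : 'M[R]_n, A \in unitmx /\
    (forall x y, br (x *m A) (y *m A) = br0 x y *m A).

End LieDefs.

From HB Require Import structures.
From mathcomp Require Import all_boot all_order all_algebra.
From mathcomp Require Import all_classical all_reals all_analysis.
From mathcomp Require Import ring lra zify.
Import Order.TTheory GRing.Theory Num.Theory numFieldNormedType.Exports.
Local Open Scope classical_set_scope.
Local Open Scope ring_scope.

(* Conjugating the bracket by U turns the modified Killing form into its pull-back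
   (x, y) |-> B (x U) (y U), which has the same inertia as B, and along the contraction
   these forms converge pointwise to the form of g_0.  So it suffices that rank_+ is lower
   semicontinuous: if B_0 is positive definite on a p0-dimensional subspace W, then so is
   B_t for t close to the limit, while B_t is nonpositive on an (n - p)-dimensional
   subspace; these meet only in 0, hence p0 + (n - p) <= n.  For rank_- apply this to -B. *)

Section BilinearForms.
Context {R : realType} {n : nat}.

Lemma oppr_half_sqr_le_mul (a b g e : R) : `|g| <= e ->
  - (e * (a ^+ 2 + b ^+ 2) / 2) <= a * b * g.
Proof.
move=> ge; have e0 : 0 <= e := le_trans (normr_ge0 g) ge.
have amgm : `|a * b| * 2 <= a ^+ 2 + b ^+ 2.
  rewrite -[a ^+ 2]real_normK ?num_real // -[b ^+ 2]real_normK ?num_real //.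
  rewrite normrM; have := sqr_ge0 (`|a| - `|b|); nra.
have : `|a * b * g| <= `|a * b| * e by rewrite normrM ler_wpM2l.
have := ler_norm (- (a * b * g)); rewrite normrN; nra.
Qed.

Lemma diag_dominant_quad_form_gt0 (I : finType) (G : I -> I -> R) (c : I -> R) (e : R) :
  0 <= e -> (forall i j, i != j -> `|G i j| <= e) ->
  (forall i, c i != 0 -> #|I|%:R * e < G i i) -> (exists i, c i != 0) ->
  0 < \sum_i \sum_j c i * c j * G i j.
Proof.
move=> e0 offG diagG [i0 ci0].
pose L i j := (i == j)%:R * (c i ^+ 2 * G i i) - e * c i ^+ 2 / 2 - e * c j ^+ 2 / 2.
have le_L i j : L i j <= c i * c j * G i j.
  rewrite /L; have [<-|ij] := eqVneq i j; last first.
    by rewrite mul0r add0r -opprD -mulrDl -mulrDr oppr_half_sqr_le_mul ?offG.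
  have := sqr_ge0 (c i); rewrite mul1r expr2; nra.
have sumL : \sum_i \sum_j L i j = \sum_i c i ^+ 2 * (G i i - #|I|%:R * e).
  under eq_bigr => i _ do rewrite !sumrB sumr_const.
  rewrite !sumrB (sumr_const _ (\sum_j _)) -sumrMnl -!sumrB.
  apply: eq_bigr => i _; rewrite (bigD1 i) //= eqxx mul1r big1 ?addr0; last first.
    by move=> j /negbTE; rewrite eq_sym => ->; rewrite mul0r.
  by field.
have sum_le : \sum_i \sum_j L i j <= \sum_i \sum_j c i * c j * G i j.
  by apply: ler_sum => i _; apply: ler_sum => j _; exact: le_L.
have term_ge0 i : 0 <= c i ^+ 2 * (G i i - #|I|%:R * e).
  have [->|/diagG/ltW] := eqVneq (c i) 0; first by rewrite expr0n mul0r.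
  by rewrite -subr_ge0 => ?; rewrite mulr_ge0 ?sqr_ge0.
have term_gt0 : 0 < c i0 ^+ 2 * (G i0 i0 - #|I|%:R * e).
  by rewrite mulr_gt0 ?subr_gt0 ?diagG // exprn_even_gt0.
apply: lt_le_trans sum_le; rewrite sumL (bigD1 i0) //=.
by apply: lt_le_trans term_gt0 _; rewrite lerDl sumr_ge0.
Qed.

Lemma linear_mulmx_sum_row {m k : nat} (f : 'rV[R]_m -> R) :
  (forall a x y, f (a *: x + y) = a * f x + f y) ->
  forall (c : 'rV[R]_k) (P : 'M[R]_(k, m)), f (c *m P) = \sum_i c 0 i * f (row i P).
Proof.
move=> linf c P.
have f0 : f 0 = 0 by have := linf 1 0 0; rewrite scale1r addr0 mul1r; lra.
have fD x y : f (x + y) = f x + f y by have := linf 1 x y; rewrite scale1r mul1r.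
rewrite mulmx_sum_row (big_morph f fD f0); apply: eq_bigr => i _.
by rewrite -[_ *: _]addr0 linf f0 addr0.
Qed.

Lemma mxrank_rowsub1 (m k : nat) (f : 'I_k -> 'I_m) : injective f ->
  \rank (rowsub f (1%:M : 'M[R]_m)) = k.
Proof.
move=> finj; apply/eqP; rewrite eqn_leq rank_leq_row /=.
have id_k : rowsub f (1%:M : 'M[R]_m) *m (rowsub f 1%:M)^T = 1%:M.
  by apply/matrixP => i j; rewrite -rowsubE !mxE (inj_eq finj) eq_sym.
by rewrite -{1}(mxrank1 R k) -id_k mxrankM_maxl.
Qed.

Implicit Types (B : 'rV[R]_n -> 'rV[R]_n -> R) (P : 'M[R]_n).

Definition bilinear_form B :=
  (forall z a x y, B (a *: x + y) z = a * B x z + B y z) /\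
  (forall z a x y, B z (a *: x + y) = a * B z x + B z y).

Lemma bilinear_form_mulmx B (c d : 'rV[R]_n) P Q : bilinear_form B ->
  B (c *m P) (d *m Q) = \sum_i \sum_j c 0 i * d 0 j * B (row i P) (row j Q).
Proof.
case=> linl linr; rewrite (linear_mulmx_sum_row _ (linl _)); apply: eq_bigr => i _.
rewrite (linear_mulmx_sum_row _ (linr _)) mulr_sumr.
by apply: eq_bigr => j _; rewrite mulrA [c 0 i * _]mulrC.
Qed.

Lemma bilinear_form_diag B (d : 'rV[R]_n) P : bilinear_form B ->
  (forall i j, i != j -> B (row i P) (row j P) = 0) ->
  B (d *m P) (d *m P) = \sum_i d 0 i ^+ 2 * B (row i P) (row i P).
Proof.
move=> bilB offB; rewrite bilinear_form_mulmx //; apply: eq_bigr => i _.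
rewrite (bigD1 i) //= big1 ?addr0 => [|j ji]; first by rewrite expr2.
by rewrite offB ?mulr0 // eq_sym.
Qed.

Lemma bilinear_form_opp B : bilinear_form B -> bilinear_form (fun x y => - B x y).
Proof. by case=> linl linr; split=> z a x y; rewrite ?linl ?linr; ring. Qed.

Lemma bilinear_form_congr B (U : 'M[R]_n) :
  bilinear_form B -> bilinear_form (fun x y => B (x *m U) (y *m U)).
Proof. by case=> linl linr; split=> z a x y; rewrite mulmxDl -scalemxAl ?linl ?linr. Qed.

Lemma inertia_opp B p q : inertia B p q -> inertia (fun x y => - B x y) q p.
Proof.
case=> P [uP offP cardp cardq]; exists P; split => //.
- by move=> i j ij; rewrite offP // oppr0.
- by rewrite -cardq; apply: eq_card => i; rewrite !inE oppr_gt0.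
- by rewrite -cardp; apply: eq_card => i; rewrite !inE oppr_lt0.
Qed.

Lemma inertia_congr B (U : 'M[R]_n) p q : U \in unitmx -> inertia B p q ->
  inertia (fun x y => B (x *m U) (y *m U)) p q.
Proof.
move=> uU [P [uP offP cardp cardq]]; exists (P *m invmx U).
have rowK i : row i (P *m invmx U) *m U = row i P by rewrite row_mul mulmxKV.
split.
- by rewrite unitmx_mul uP unitmx_inv.
- by move=> i j ij; rewrite !rowK offP.
- by rewrite -cardp; apply: eq_card => i; rewrite !inE !rowK.
- by rewrite -cardq; apply: eq_card => i; rewrite !inE !rowK.
Qed.

Lemma exists_common_row_combination {P0 P} {S N : {pred 'I_n}} :
  P0 \in unitmx -> P \in unitmx -> (n < #|S| + #|N|)%N ->
  exists c d : 'rV[R]_n, [/\ c != 0, (forall i, i \notin S -> c 0 i = 0),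
     (forall i, i \notin N -> d 0 i = 0) & c *m P0 = d *m P].
Proof.
move=> uP0 uP ltn.
pose sel (X : {pred 'I_n}) := rowsub (@enum_val _ X) (1%:M : 'M[R]_n).
have rank_sel X A : A \in unitmx -> \rank (sel X *m A) = #|X|.
  move=> uA; rewrite mxrankMfree ?row_free_unit ?mxrank_rowsub1 //.
  exact: enum_val_inj.
have sel_support X (a : 'rV_#|X|) i : i \notin X -> (a *m sel X) 0 i = 0.
  move=> iX; rewrite !mxE big1 // => k _; rewrite !mxE.
  by case: eqP => [eki|]; [have := enum_valP k; rewrite eki (negbTE iX) | rewrite mulr0].
have : (sel S *m P0 :&: sel N *m P)%MS != 0.
  rewrite -mxrank_eq0; apply: contraTneq ltn => cap0.
  rewrite -leqNgt -(rank_sel S P0) // -(rank_sel N P) //.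
  by rewrite -mxrank_sum_cap cap0 addn0 rank_leq_col.
case/rowV0Pn => w w_cap w0.
have /submxP [c' wc] := submx_trans w_cap (capmxSl _ _).
have /submxP [d' wd] := submx_trans w_cap (capmxSr _ _).
exists (c' *m sel S), (d' *m sel N); split; try exact: sel_support.
- by apply: contraNneq w0 => c0; rewrite wc mulmxA c0 mul0mx.
- by rewrite -!mulmxA -wc -wd.
Qed.

Lemma card_le0_diag {B P p} :
  #|[pred i : 'I_n | 0 < B (row i P) (row i P)]| = p ->
  #|[pred i : 'I_n | B (row i P) (row i P) <= 0]| = (n - p)%N.
Proof.
move=> cardp; rewrite (eq_card (B := [predC [pred i | 0 < B (row i P) (row i P)]])) => [|i].
  have := cardC [pred i | 0 < B (row i P) (row i P)].
  by rewrite cardp card_ord => /(congr1 (subn^~ p)); rewrite addKn.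
by rewrite !inE leNgt.
Qed.

Lemma inertia_pos_le_cvg {T : Type} {F : set_system T} {FF : ProperFilter F}
    {Bt : T -> 'rV[R]_n -> 'rV[R]_n -> R} {B0} {p q p0 q0 : nat} :
  (\forall t \near F, bilinear_form (Bt t) /\ inertia (Bt t) p q) ->
  (forall x y, (fun t => Bt t x y) @ F --> B0 x y) ->
  inertia B0 p0 q0 -> (p0 <= p)%N.
Proof.
move=> Bt_near cvgB [P0 [uP0 offP0 cardp0 _]]; rewrite leqNgt; apply/negP => ltp.
pose d i := B0 (row i P0) (row i P0).
pose delta := \big[Num.min/1]_(i | 0 < d i) d i.
have delta_gt0 : 0 < delta by apply: lt_bigmin.
(* With this [e], near the limit the Gram matrix of [Bt t] on the rows of [P0] is
   diagonally dominant on the rows where [B0] is positive. *)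
pose e := delta / n.+1%:R.
have e_gt0 : 0 < e by rewrite divr_gt0 ?ltr0Sn.
have close_near : \forall t \near F,
    forall i j, `|B0 (row i P0) (row j P0) - Bt t (row i P0) (row j P0)| < e.
  by apply: filter_forall => i; apply: filter_forall => j; exact: cvgr_dist_lt.
have [t [[bilBt [P [uP offP cardp _]]] close]] := filter_ex (filterI Bt_near close_near).
pose N := [pred i | Bt t (row i P) (row i P) <= 0].
have cardN : #|N| = (n - p)%N := card_le0_diag cardp.
have le_p_n : (p <= n)%N by rewrite -cardp -[X in (_ <= X)%N](card_ord n) max_card.
pose S := [pred i | 0 < d i].
have cardS : #|S| = p0 := cardp0.
have ltn : (n < #|S| + #|N|)%N by rewrite cardS cardN; lia.
have [c [c' [c0 c_supp c'_supp cc']]] := exists_common_row_combination uP0 uP ltn.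
have : Bt t (c *m P0) (c *m P0) <= 0.
  rewrite cc' bilinear_form_diag //; apply: sumr_le0 => i _.
  have [iN|/c'_supp->] := boolP (i \in N); last by rewrite expr0n mul0r.
  by rewrite mulr_ge0_le0 ?sqr_ge0.
apply/negP; rewrite -ltNge bilinear_form_mulmx //.
apply: (@diag_dominant_quad_form_gt0 _ _ _ e); rewrite ?card_ord ?ltW //; last exact/rV0Pn.
- by move=> i j ij; have := close i j; rewrite offP0 // sub0r normrN => /ltW.
move=> i ci; have ppos : i \in S by apply: contraNT ci => /c_supp ->.
have delta_le : delta <= d i by exact: bigmin_le_cond.
have := ler_norm (d i - Bt t (row i P0) (row i P0)).
have := close i i; rewrite -/(d i).
have : delta = e * n.+1%:R by rewrite mulfVK ?pnatr_eq0.
rewrite -natr1; nra.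
Qed.

Lemma inertia_le_cvg {T : Type} {F : set_system T} {FF : ProperFilter F}
    {Bt : T -> 'rV[R]_n -> 'rV[R]_n -> R} {B0} {p q p0 q0 : nat} :
  (\forall t \near F, bilinear_form (Bt t) /\ inertia (Bt t) p q) ->
  (forall x y, (fun t => Bt t x y) @ F --> B0 x y) ->
  inertia B0 p0 q0 -> (p0 <= p)%N /\ (q0 <= q)%N.
Proof.
move=> Bt_near cvgB inB0; split; first exact: inertia_pos_le_cvg Bt_near cvgB inB0.
apply: (@inertia_pos_le_cvg _ F _ (fun t x y => - Bt t x y) (fun x y => - B0 x y) q p q0 p0).
- apply: filterS Bt_near => t [bilBt inBt].
  by split; [exact: bilinear_form_opp | exact: inertia_opp].
- by move=> x y; apply: cvgN.
- exact: inertia_opp.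
Qed.

End BilinearForms.

Section ConvergenceOfForms.
Context {R : realType} {n : nat} {T : Type} {F : set_system T} {FF : Filter F}.
Context {brt : T -> bracket R n} {br0 : bracket R n}.
Hypothesis cvg_br : forall x y k, (fun t => brt t x y 0 k) @ F --> br0 x y 0 k.

Lemma cvg_ad_mx x i j : (fun t => ad_mx (brt t) x i j) @ F --> ad_mx br0 x i j.
Proof. by under eq_fun do rewrite mxE; rewrite mxE; exact: cvg_br. Qed.

Lemma cvg_trace_ad x : (fun t => \tr (ad_mx (brt t) x)) @ F --> \tr (ad_mx br0 x).
Proof. by rewrite /mxtrace; apply: (cvg_big add_continuous) => i _; exact: cvg_ad_mx. Qed.

Lemma cvg_killing x y : (fun t => killing (brt t) x y) @ F --> killing br0 x y.
Proof.
rewrite /killing /mxtrace; under eq_fun do under eq_bigr do rewrite mxE.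
under eq_bigr do rewrite mxE.
apply: (cvg_big add_continuous) => i _; apply: (cvg_big add_continuous) => j _.
by apply: cvgM; exact: cvg_ad_mx.
Qed.

Lemma cvg_mkilling alpha x y :
  (fun t => mkilling alpha (brt t) x y) @ F --> mkilling alpha br0 x y.
Proof.
apply: cvgD; first exact: cvg_killing.
by apply: cvgM; [apply: cvgM; [exact: cvg_cst | exact: cvg_trace_ad] | exact: cvg_trace_ad].
Qed.

End ConvergenceOfForms.

Section KillingForms.
Context {R : realType} {n : nat} {br : bracket R n}.
Hypothesis lie_br : is_lie_bracket br.

Lemma lie_bracket_adE u v : br u v = v *m ad_mx br u.
Proof.
case: lie_br => _ linr _ _; apply/rowP => k.
have linf a x y : br u (a *: x + y) 0 k = a * br u x 0 k + br u y 0 k.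
  by rewrite linr !mxE.
rewrite -[v in LHS]mulmx1 (linear_mulmx_sum_row _ linf) !mxE.
by apply: eq_bigr => i _; rewrite row1 !mxE.
Qed.

Lemma ad_mx_linear a x y : ad_mx br (a *: x + y) = a *: ad_mx br x + ad_mx br y.
Proof. by case: lie_br => linl _ _ _; apply/matrixP => i j; rewrite !mxE linl !mxE. Qed.

Lemma ad_mx_contracted (U : 'M[R]_n) x :
  ad_mx (contracted br U) x = U *m ad_mx br (x *m U) *m invmx U.
Proof.
apply/row_matrixP => i; rewrite !row_mul -lie_bracket_adE rowE.
by apply/rowP => j; rewrite !mxE.
Qed.

Lemma trace_ad_contracted (U : 'M[R]_n) x : U \in unitmx ->
  \tr (ad_mx (contracted br U) x) = \tr (ad_mx br (x *m U)).
Proof. by move=> uU; rewrite ad_mx_contracted mxtrace_mulC mulmxA mulVmx ?mul1mx. Qed.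

Lemma killing_contracted (U : 'M[R]_n) x y : U \in unitmx ->
  killing (contracted br U) x y = killing br (x *m U) (y *m U).
Proof.
move=> uU; rewrite /killing !ad_mx_contracted -!mulmxA (mulmxA (invmx U) U) mulVmx //.
by rewrite mul1mx !mulmxA mxtrace_mulC !mulmxA mulVmx ?mul1mx.
Qed.

Lemma mkilling_contracted alpha (U : 'M[R]_n) x y : U \in unitmx ->
  mkilling alpha (contracted br U) x y = mkilling alpha br (x *m U) (y *m U).
Proof. by move=> uU; rewrite /mkilling killing_contracted // !trace_ad_contracted. Qed.

Lemma bilinear_form_mkilling alpha : bilinear_form (mkilling alpha br).
Proof.
rewrite /mkilling /killing; split=> z a x y; rewrite ad_mx_linear.
  by rewrite mulmxDl -scalemxAl !mxtraceD !mxtraceZ; ring.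
by rewrite mulmxDr -scalemxAr !mxtraceD !mxtraceZ; ring.
Qed.

Lemma mkilling0 : mkilling 0 br = killing br.
Proof. by apply/funext => x; apply/funext => y; rewrite /mkilling !mul0r addr0. Qed.

Lemma contraction_mkilling_inertia_le {T : Type} {F : set_system T} {FF : ProperFilter F}
    {U : T -> 'M[R]_n} {br0 : bracket R n} {alpha : R} {p q p0 q0 : nat} :
  (\forall t \near F, U t \in unitmx) ->
  (forall x y k, (fun t => contracted br (U t) x y 0 k) @ F --> br0 x y 0 k) ->
  inertia (mkilling alpha br) p q -> inertia (mkilling alpha br0) p0 q0 ->
  (p0 <= p)%N /\ (q0 <= q)%N.
Proof.
move=> U_near cvg_br inB inB0.
apply: (inertia_le_cvg _ (cvg_mkilling cvg_br alpha) inB0).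
apply: filterS U_near => t uU.
have -> : mkilling alpha (contracted br (U t)) =
          fun x y => mkilling alpha br (x *m U t) (y *m U t).
  by apply/funext => x; apply/funext => y; exact: mkilling_contracted.
split; [exact: bilinear_form_congr (bilinear_form_mkilling _) | exact: inertia_congr].
Qed.

End KillingForms.

Theorem theorem1 (R : realType) (n : nat) (br br0 : bracket R n) :
  is_lie_bracket br ->
  (continuous_contraction br br0 \/ sequential_contraction br br0) ->
  ~ lie_isomorphic br0 br ->
  (forall p q p0 q0 : nat,
     inertia (killing br) p q -> inertia (killing br0) p0 q0 ->
     (p0 <= p)%N /\ (q0 <= q)%N) /\
  (forall (alpha : R) (p q p0 q0 : nat),
     inertia (mkilling alpha br) p q -> inertia (mkilling alpha br0) p0 q0 ->
     (p0 <= p)%N /\ (q0 <= q)%N).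
Proof.
move=> lie_br contraction _.
have mkilling_le alpha p q p0 q0 : inertia (mkilling alpha br) p q ->
    inertia (mkilling alpha br0) p0 q0 -> (p0 <= p)%N /\ (q0 <= q)%N.
  case: contraction => [[U [U_unit _ cvg_br]] | [U [U_unit cvg_br]]].
  - apply: (contraction_mkilling_inertia_le lie_br _ cvg_br).
    near=> e; apply: U_unit; apply/andP; split; near: e.
    + exact: nbhs_right_gt.
    + exact: nbhs_right_le.
  - by apply: (contraction_mkilling_inertia_le lie_br _ cvg_br); apply: nearW.
split=> [p q p0 q0|//].
by rewrite -(mkilling0 (br := br)) -(mkilling0 (br := br0)); exact: mkilling_le.
Unshelve. all: by end_near.
Qed.
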